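(* Let $\gamma_*>0$ and let $\Phi$ denote the standard normal CDF. Define \[ t_+=\tfrac32\gamma_*+\tfrac{1}{\gamma_*}\log\left(1-\sqrt{1-e^{-\gamma_*}}\right),\qquad t_-=\tfrac32\gamma_*+\tfrac{1}{\gamma_*}\log\left(1+\sqrt{1-e^{-\gamma_*}}\right), \] and for $x\ne2\gamma_*$ \[ h(x)=\frac{\Phi(t_--x)-\Phi(t_--2\gamma_* )}{\Phi(t_+-x)-\Phi(t_+-2\gamma_* )}. \] Let $k=e^{-\frac12(t_--2\gamma_* )^2+\frac12(t_+-2\gamma_* )^2}$ and $c=\frac{k}{1+k}$. Then $\lim_{x\to2\gamma_*}h(x)=k$, $c\in(0,1)$, and \[ h(x)\le\frac{c}{1-c}\ \text{ if } x<2\gamma_*,\qquad h(x)\ge\frac{c}{1-c}\ \text{ if } x>2\gamma_*. \] *)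

From Stdlib Require Import Reals.
From Coquelicot Require Import Coquelicot.
Open Scope R_scope.

Definition std_normal_pdf (t : R) : R := exp (- t ^ 2 / 2) / sqrt (2 * PI).
Definition Phi (x : R) : R :=
  RInt_gen std_normal_pdf (Rbar_locally m_infty) (at_point x).

Definition t_plus (g : R) : R := 3 / 2 * g + / g * ln (1 - sqrt (1 - exp (- g))).
Definition t_minus (g : R) : R := 3 / 2 * g + / g * ln (1 + sqrt (1 - exp (- g))).

Definition h_fun (g x : R) : R :=
  (Phi (t_minus g - x) - Phi (t_minus g - 2 * g)) /
  (Phi (t_plus g - x) - Phi (t_plus g - 2 * g)).

Definition k_const (g : R) : R :=
  exp (- / 2 * (t_minus g - 2 * g) ^ 2 + / 2 * (t_plus g - 2 * g) ^ 2).

Definition c_const (g : R) : R := k_const g / (1 + k_const g).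

(* With a = t_- - 2g, b = t_+ - 2g and w = 2g - x, h is the ratio of the
   increments (Phi (a + w) - Phi a) / (Phi (b + w) - Phi b), and k = phi a / phi b
   for the Gaussian density phi; the limit at w = 0 is therefore the ratio of the
   derivatives.  Since b <= a, phi (a + s) = exp (- (a - b) s) * k * phi (b + s),
   so w |-> Phi (a + w) - k Phi (b + w) increases up to w = 0 and decreases
   afterwards: Phi (a + w) - Phi a <= k (Phi (b + w) - Phi b) for every w.
   Dividing by the increment of Phi at b, which has the sign of w, gives both
   bounds, and c / (1 - c) = k. *)

From Stdlib Require Import Reals Lra.
From Coquelicot Require Import Coquelicot.
Open Scope R_scope.

Lemma exp_le_exp x y : x <= y -> exp x <= exp y.
Proof. intros [Hlt | ->]; [left; now apply exp_increasing | apply Rle_refl]. Qed.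

Lemma is_lim_difference_quotient (F : R -> R) (a l : R) :
  is_derive F a l -> is_lim (fun w => (F (a + w) - F a) / w) 0 l.
Proof.
  intros dF%is_derive_Reals. apply is_lim_spec. intros eps.
  destruct (dF eps (cond_pos eps)) as [delta Hdelta].
  exists delta. intros w Hw Hw0. apply Hdelta; [exact Hw0|].
  now rewrite <- (Rminus_0_r w).
Qed.

Lemma is_lim_increment_ratio (F G : R -> R) (a b dF dG : R) :
  is_derive F a dF -> is_derive G b dG -> dG <> 0 ->
  is_lim (fun w => (F (a + w) - F a) / (G (b + w) - G b)) 0 (dF / dG).
Proof.
  intros HF HG HdG.
  apply is_lim_ext_loc with
    (fun w => ((F (a + w) - F a) / w) / ((G (b + w) - G b) / w)).
  - exists (mkposreal 1 Rlt_0_1). intros w _ Hw.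
    (* no side condition on the denominator: both sides vanish when it does *)
    unfold Rdiv. rewrite Rinv_mult, Rinv_inv.
    transitivity ((F (a + w) - F a) * / (G (b + w) - G b) * (w * / w)); [ring|].
    now rewrite Rinv_r, Rmult_1_r.
  - apply (is_lim_div _ _ _ dF dG).
    + now apply is_lim_difference_quotient.
    + now apply is_lim_difference_quotient.
    + now intros [=].
    + exact I.
Qed.

Lemma max_at_derive_sign_change (G dG : R -> R) (w : R) :
  (forall s, is_derive G s (dG s)) ->
  (forall s, 0 <= s -> dG s <= 0) -> (forall s, s <= 0 -> 0 <= dG s) ->
  G w <= G 0.
Proof.
  intros HG Hpos Hneg.
  destruct (MVT_gen G 0 w dG) as [c [Hc HGc]].
  - intros x _. apply HG.
  - intros x _. apply continuity_pt_filterlim.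
    apply (ex_derive_continuous (K := R_AbsRing) (V := R_NormedModule)).
    eexists. apply HG.
  - revert Hc. unfold Rmin, Rmax.
    destruct (Rle_dec 0 w); intros Hc.
    + specialize (Hpos c (proj1 Hc)). nra.
    + specialize (Hneg c (proj2 Hc)). nra.
Qed.

Lemma ex_RInt_gen_m_infty_cauchy (f : R -> R) (x : R) :
  (forall p q, ex_RInt f p q) ->
  (forall eps : posreal, exists M, forall p q, p <= q <= M -> Rabs (RInt f p q) < eps) ->
  ex_RInt_gen f (Rbar_locally m_infty) (at_point x).
Proof.
  intros Hf Hcauchy.
  assert (Hunique : filter_prod (Rbar_locally m_infty) (at_point x)
    (fun ab : R * R => (exists l : R, is_RInt f (fst ab) (snd ab) l) /\
       forall l1 l2 : R, is_RInt f (fst ab) (snd ab) l1 ->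
         is_RInt f (fst ab) (snd ab) l2 -> l1 = l2)).
  { apply filter_forall. intros [p q]. split.
    - exists (RInt f p q). apply (RInt_correct (V := R_CompleteNormedModule)), Hf.
    - intros l1 l2 H1 H2.
      apply (is_RInt_unique (V := R_CompleteNormedModule)) in H1, H2. congruence. }
  destruct (proj1 (filterlimi_locally_cauchy (U := R_CompleteSpace)
    (fun ab => is_RInt f (fst ab) (snd ab)) Hunique)) as [l Hl].
  - intros eps. destruct (Hcauchy eps) as [M HM].
    assert (Habs : forall p q, p <= M -> q <= M -> Rabs (RInt f p q) < eps).
    { intros p q Hp Hq. destruct (Rle_dec p q).
      - apply HM. lra.
      - rewrite <- opp_RInt_swap by apply Hf.
        change (Rabs (- RInt f q p) < eps). rewrite Rabs_Ropp. apply HM. lra. }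
    exists (fun ab => fst ab < M /\ snd ab = x). split.
    + apply (Filter_prod _ _ _ (fun p => p < M) (fun q => q = x)); [now exists M | easy | easy].
    + intros [p1 q1] [p2 q2] [Hp1 ->] [Hp2 ->] l1 l2 H1 H2.
      apply (is_RInt_unique (V := R_CompleteNormedModule)) in H1, H2.
      simpl in *. subst l1 l2.
      change (Rabs (RInt f p2 x - RInt f p1 x) < eps).
      rewrite <- (RInt_Chasles f p2 p1 x) by apply Hf.
      change (Rabs (RInt f p2 p1 + RInt f p1 x - RInt f p1 x) < eps).
      rewrite Rplus_minus_r.
      apply Habs; lra.
  - now exists l.
Qed.

Lemma sqrt_2PI_ge_1 : 1 <= sqrt (2 * PI).
Proof.
  rewrite <- sqrt_1. apply sqrt_le_1_alt.
  pose proof PI_RGT_0. pose proof PI2_3_2. lra.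
Qed.

Lemma std_normal_pdf_pos t : 0 < std_normal_pdf t.
Proof.
  apply Rdiv_lt_0_compat; [apply exp_pos|].
  pose proof sqrt_2PI_ge_1. lra.
Qed.

Lemma continuous_std_normal_pdf t : continuous std_normal_pdf t.
Proof.
  apply (ex_derive_continuous (K := R_AbsRing) (V := R_NormedModule)).
  unfold std_normal_pdf. auto_derive. auto.
Qed.

Lemma ex_RInt_std_normal_pdf p q : ex_RInt std_normal_pdf p q.
Proof.
  apply (ex_RInt_continuous (V := R_CompleteNormedModule)).
  intros t _. apply continuous_std_normal_pdf.
Qed.

Lemma std_normal_pdf_le_exp t : std_normal_pdf t <= exp (t + 1).
Proof.
  pose proof sqrt_2PI_ge_1. pose proof (exp_pos (- t ^ 2 / 2)).
  apply Rle_trans with (exp (- t ^ 2 / 2)).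
  - apply Rle_div_l; nra.
  - apply exp_le_exp. nra.
Qed.

Lemma RInt_std_normal_pdf_bound p q :
  p <= q -> 0 <= RInt std_normal_pdf p q <= exp (q + 1) - exp (p + 1).
Proof.
  intros Hpq.
  assert (Hexp : is_RInt (fun t => exp (t + 1)) p q (exp (q + 1) - exp (p + 1))).
  { apply (is_RInt_derive (V := R_CompleteNormedModule) (fun t => exp (t + 1))).
    - intros t _. auto_derive; [easy | ring].
    - intros t _. apply (ex_derive_continuous (K := R_AbsRing) (V := R_NormedModule)).
      auto_derive. easy. }
  split.
  - rewrite <- (Rmult_0_r (q - p)), <- (RInt_const (V := R_CompleteNormedModule)).
    apply RInt_le; [exact Hpq | apply ex_RInt_const | apply ex_RInt_std_normal_pdf |].
    intros t _. left. apply std_normal_pdf_pos.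
  - rewrite <- (is_RInt_unique _ _ _ _ Hexp).
    apply RInt_le; [exact Hpq | apply ex_RInt_std_normal_pdf | eexists; exact Hexp |].
    intros t _. apply std_normal_pdf_le_exp.
Qed.

Lemma ex_RInt_gen_std_normal_pdf x :
  ex_RInt_gen std_normal_pdf (Rbar_locally m_infty) (at_point x).
Proof.
  apply ex_RInt_gen_m_infty_cauchy; [apply ex_RInt_std_normal_pdf|].
  intros eps. exists (ln eps - 1). intros p q [Hpq HqM].
  destruct (RInt_std_normal_pdf_bound p q Hpq) as [H0 H1].
  rewrite Rabs_pos_eq by exact H0.
  pose proof (exp_pos (p + 1)).
  assert (exp (q + 1) <= eps).
  { rewrite <- (exp_ln eps) by apply cond_pos. apply exp_le_exp. lra. }
  lra.
Qed.

Lemma Phi_sub y z : Phi y - Phi z = RInt std_normal_pdf z y.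
Proof.
  unfold Phi.
  rewrite <- (RInt_gen_Chasles std_normal_pdf z (ex_RInt_gen_std_normal_pdf z)).
  - rewrite RInt_gen_at_point by apply ex_RInt_std_normal_pdf.
    change (Phi z + RInt std_normal_pdf z y - Phi z = RInt std_normal_pdf z y).
    ring.
  - apply ex_RInt_gen_at_point, ex_RInt_std_normal_pdf.
Qed.

Lemma is_derive_Phi x : is_derive Phi x (std_normal_pdf x).
Proof.
  assert (H : is_derive (fun y => Phi y - Phi x) x (std_normal_pdf x)).
  { apply (is_derive_RInt (V := R_NormedModule) _ _ x).
    - apply filter_forall. intros y. rewrite Phi_sub.
      apply (RInt_correct (V := R_CompleteNormedModule)), ex_RInt_std_normal_pdf.
    - apply continuous_std_normal_pdf. }
  apply (is_derive_ext (fun y => Phi y - Phi x + Phi x)); [intros t; simpl; ring|].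
  rewrite <- (plus_zero_r (std_normal_pdf x)).
  apply (is_derive_plus _ (fun _ => Phi x)); [exact H |].
  apply (is_derive_const (K := R_AbsRing) (V := R_NormedModule)).
Qed.

Lemma is_derive_Phi_shift a s :
  is_derive (fun t => Phi (a + t)) s (std_normal_pdf (a + s)).
Proof.
  rewrite <- (scal_one (std_normal_pdf (a + s))).
  apply (is_derive_comp Phi (fun t => a + t)); [apply is_derive_Phi|].
  auto_derive; [easy | reflexivity].
Qed.

Lemma Phi_increasing y z : y < z -> Phi y < Phi z.
Proof.
  intros Hyz.
  destruct (MVT_gen Phi y z std_normal_pdf) as [c [_ Hc]].
  - intros t _. apply is_derive_Phi.
  - intros t _. apply continuity_pt_filterlim.
    apply (ex_derive_continuous (K := R_AbsRing) (V := R_NormedModule)).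
    eexists. apply is_derive_Phi.
  - pose proof (std_normal_pdf_pos c). nra.
Qed.

Lemma std_normal_pdf_ratio a b :
  std_normal_pdf a / std_normal_pdf b = exp (- / 2 * a ^ 2 + / 2 * b ^ 2).
Proof.
  unfold std_normal_pdf.
  replace (- / 2 * a ^ 2 + / 2 * b ^ 2) with (- a ^ 2 / 2 - - b ^ 2 / 2) by field.
  unfold Rminus. rewrite exp_plus, exp_Ropp.
  pose proof sqrt_2PI_ge_1. pose proof (exp_pos (- b ^ 2 / 2)).
  field. lra.
Qed.

Lemma std_normal_pdf_tilt a b s :
  std_normal_pdf (a + s) =
  exp (- ((a - b) * s)) * (std_normal_pdf a / std_normal_pdf b) * std_normal_pdf (b + s).
Proof.
  rewrite std_normal_pdf_ratio. unfold std_normal_pdf.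
  rewrite Rmult_div_assoc, <- !exp_plus.
  f_equal. f_equal. field.
Qed.

Lemma Phi_increment_tilt a b w : b <= a ->
  Phi (a + w) - Phi a <= std_normal_pdf a / std_normal_pdf b * (Phi (b + w) - Phi b).
Proof.
  intros Hba. set (k := std_normal_pdf a / std_normal_pdf b).
  assert (Hk : 0 < k) by (apply Rdiv_lt_0_compat; apply std_normal_pdf_pos).
  assert (HdG : forall s, std_normal_pdf (a + s) - k * std_normal_pdf (b + s) =
                     (exp (- ((a - b) * s)) - 1) * (k * std_normal_pdf (b + s))).
  { intros s. rewrite (std_normal_pdf_tilt a b s). fold k. ring. }
  assert (Hkb : forall s, 0 < k * std_normal_pdf (b + s)).
  { intros s. apply Rmult_lt_0_compat; [exact Hk | apply std_normal_pdf_pos]. }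
  cut (Phi (a + w) - k * Phi (b + w) <= Phi (a + 0) - k * Phi (b + 0)).
  { rewrite !Rplus_0_r. lra. }
  apply (max_at_derive_sign_change (fun s => Phi (a + s) - k * Phi (b + s))
    (fun s => std_normal_pdf (a + s) - k * std_normal_pdf (b + s))).
  - intros s. apply (is_derive_minus (K := R_AbsRing) (V := R_NormedModule));
      [| apply is_derive_scal]; apply is_derive_Phi_shift.
  - intros s Hs. rewrite HdG. specialize (Hkb s).
    assert (exp (- ((a - b) * s)) <= 1) by (rewrite <- exp_0; apply exp_le_exp; nra).
    nra.
  - intros s Hs. rewrite HdG. specialize (Hkb s).
    assert (1 <= exp (- ((a - b) * s))) by (rewrite <- exp_0; apply exp_le_exp; nra).
    nra.
Qed.

Lemma Phi_increment_ratio_le a b w : b <= a -> 0 < w ->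
  (Phi (a + w) - Phi a) / (Phi (b + w) - Phi b) <= std_normal_pdf a / std_normal_pdf b.
Proof.
  intros Hba Hw.
  assert (HD : 0 < Phi (b + w) - Phi b) by (apply Rlt_0_minus, Phi_increasing; lra).
  apply Rle_div_l; [exact HD|].
  now apply Phi_increment_tilt.
Qed.

Lemma Phi_increment_ratio_ge a b w : b <= a -> w < 0 ->
  (Phi (a + w) - Phi a) / (Phi (b + w) - Phi b) >= std_normal_pdf a / std_normal_pdf b.
Proof.
  intros Hba Hw.
  assert (HD : 0 < Phi b - Phi (b + w)) by (apply Rlt_0_minus, Phi_increasing; lra).
  replace ((Phi (a + w) - Phi a) / (Phi (b + w) - Phi b))
    with ((Phi a - Phi (a + w)) / (Phi b - Phi (b + w))) by (field; lra).
  apply Rle_ge, (Rle_div_r _ _ _ HD).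
  pose proof (Phi_increment_tilt a b w Hba). lra.
Qed.

Lemma t_plus_le_t_minus g : 0 < g -> t_plus g <= t_minus g.
Proof.
  intros hg. unfold t_plus, t_minus.
  set (s := sqrt (1 - exp (- g))).
  assert (Hs0 : 0 <= s) by apply sqrt_pos.
  assert (Hs1 : s < 1).
  { rewrite <- sqrt_1. apply sqrt_lt_1_alt.
    assert (exp (- g) < 1) by (rewrite <- exp_0; apply exp_increasing; lra).
    pose proof (exp_pos (- g)). lra. }
  assert (Hln : ln (1 - s) <= ln (1 + s)) by (apply ln_le; lra).
  assert (0 < / g) by (apply Rinv_0_lt_compat, hg).
  nra.
Qed.

Lemma h_fun_increments g x :
  h_fun g x =
  (Phi (t_minus g - 2 * g + (2 * g - x)) - Phi (t_minus g - 2 * g)) /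
  (Phi (t_plus g - 2 * g + (2 * g - x)) - Phi (t_plus g - 2 * g)).
Proof.
  unfold h_fun.
  now replace (t_minus g - 2 * g + (2 * g - x)) with (t_minus g - x) by ring;
    replace (t_plus g - 2 * g + (2 * g - x)) with (t_plus g - x) by ring.
Qed.

Theorem lemma7 (g : R) (hg : 0 < g) :
  is_lim (h_fun g) (2 * g) (k_const g) /\
  (0 < c_const g < 1) /\
  (forall x, x < 2 * g -> h_fun g x <= c_const g / (1 - c_const g)) /\
  (forall x, x > 2 * g -> h_fun g x >= c_const g / (1 - c_const g)).
Proof.
  set (a := t_minus g - 2 * g). set (b := t_plus g - 2 * g).
  assert (Hba : b <= a) by (pose proof (t_plus_le_t_minus g hg); unfold a, b; lra).
  assert (Hk : k_const g = std_normal_pdf a / std_normal_pdf b)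
    by (symmetry; apply std_normal_pdf_ratio).
  assert (Hk0 : 0 < k_const g) by apply exp_pos.
  assert (Hodds : c_const g / (1 - c_const g) = k_const g)
    by (unfold c_const; field; lra).
  rewrite Hodds, Hk.
  split; [|split; [|split]].
  - apply (is_lim_ext
      (fun x => (Phi (a + (2 * g - x)) - Phi a) / (Phi (b + (2 * g - x)) - Phi b)));
      [intros x; symmetry; apply h_fun_increments|].
    apply (is_lim_comp (fun w => (Phi (a + w) - Phi a) / (Phi (b + w) - Phi b))
      (fun x => 2 * g - x) (2 * g) _ 0).
    + apply is_lim_increment_ratio; [apply is_derive_Phi .. |].
      apply Rgt_not_eq, std_normal_pdf_pos.
    + replace (Finite 0) with (Finite (2 * g - 2 * g)) by (f_equal; ring).
      apply is_lim_continuity. reg.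
    + exists (mkposreal 1 Rlt_0_1). intros x _ Hx [= Hx0]. lra.
  - unfold c_const. split; [apply Rdiv_lt_0_compat | apply Rlt_div_l]; lra.
  - intros x Hx. rewrite h_fun_increments. apply Phi_increment_ratio_le; lra.
  - intros x Hx. rewrite h_fun_increments. apply Phi_increment_ratio_ge; lra.
Qed.
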